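(* Let $\mathbb{N}$ be a strongly connected directed graph on $\{1,\dots,m\}$ and let $n\ge 1$. For $i\in\{1,\dots,m\}$ let $\mathcal{N}_i=\{j^i_1,\dots,j^i_{m_i}\}$ be the set of neighbors of $i$ (including $i$), let $b_i$ be the $i$th unit vector of $\mathbb{R}^m$, $\tilde B_i = b_i\otimes I_n$, and $\tilde C_i=\mathrm{column}\{C_{ij^i_1},\dots,C_{ij^i_{m_i}}\}$ with $C_{ij}=(b_i'-b_j')\otimes I_n$. Then there exist matrices $\hat H_i\in\mathbb{R}^{n\times nm_i}$, $i\in\{1,\dots,m\}$, such that for every $q\in\{1,\dots,m\}$ the pair $\big(\sum_{i=1}^m\tilde B_i\hat H_i\tilde C_i,\ \tilde B_q\big)$ is controllable with controllability index $m$.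
   Context: The neighbor graph has an arc $j\to i$ iff $j$ is a neighbor of $i$. Strongly connected: directed paths exist between every ordered pair of vertices. The controllability index of a controllable pair $(F,G)$ is the smallest $k$ with $\mathrm{rank}[G\ FG\ \cdots\ F^{k-1}G]$ equal to the state dimension. *)

From HB Require Import structures.
From mathcomp Require Import all_boot all_order all_algebra.
From mathcomp Require Import reals.
Set Implicit Arguments. Unset Strict Implicit. Unset Printing Implicit Defensive.
Import Order.TTheory GRing.Theory Num.Theory.
Local Open Scope ring_scope.

Section Defs.
Variable R : nzRingType.

(* Kronecker product A (x) B, with the standard row-major index
   (i, j) |-> i * r + j given by mxvec_index. *)
Definition kron p q r s (A : 'M[R]_(p, q)) (B : 'M[R]_(r, s)) : 'M[R]_(p * r, q * s) :=
  \matrix_(a, b)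
    let (i, j) := enum_val (cast_ord (esym (mxvec_cast p r)) a) in
    let (k, l) := enum_val (cast_ord (esym (mxvec_cast q s)) b) in
    A i k * B j l.

Definition colstack k n N (X : 'I_k -> 'M[R]_(n, N)) : 'M[R]_(k * n, N) :=
  \matrix_(a, b)
    let (i, j) := enum_val (cast_ord (esym (mxvec_cast k n)) a) in X i j b.

Definition ctrb_mx N p (F : 'M[R]_N) (G : 'M[R]_(N, p)) (k : nat) :=
  \mxrow_(j < k) (F ^+ j *m G).
End Defs.

Section Ctrb.
Variable R : fieldType.
Definition ctrb_full N p (F : 'M[R]_N) (G : 'M[R]_(N, p)) (k : nat) : bool :=
  \rank (ctrb_mx F G k) == N.
Definition controllable N p (F : 'M[R]_N) (G : 'M[R]_(N, p)) : Prop :=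
  exists k, ctrb_full F G k.
Definition ctrb_index_eq N p (F : 'M[R]_N) (G : 'M[R]_(N, p)) (k : nat) : Prop :=
  controllable F G /\ ctrb_full F G k /\ (forall k', (k' < k)%N -> ~~ ctrb_full F G k').
End Ctrb.

Section Graph.
Variable m : nat.
(* neighbor set of i (including i); arc j -> i iff e j i, i.e. j is a neighbor of i *)
Definition nbrs (e : rel 'I_m) (i : 'I_m) : {set 'I_m} := [set j | (j == i) || e j i].
Definition strongly_connected (e : rel 'I_m) : Prop := forall i j : 'I_m, connect e i j.
End Graph.

Section Mats.
Variables (R : nzRingType) (m n : nat).
Definition Btil (i : 'I_m) : 'M[R]_(m * n, n) :=
  castmx (erefl, mul1n n) (kron (delta_mx i (0 : 'I_1)) (1%:M : 'M[R]_n)).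
Definition Cij (i j : 'I_m) : 'M[R]_(n, m * n) :=
  castmx (mul1n n, erefl)
    (kron (delta_mx (0 : 'I_1) i - delta_mx (0 : 'I_1) j) (1%:M : 'M[R]_n)).
(* C~_i = column{C_{i j_1}, ..., C_{i j_{m_i}}} with j_1 < ... < j_{m_i} the neighbors of i *)
Definition Ctil (e : rel 'I_m) (i : 'I_m) : 'M[R]_(#|nbrs e i| * n, m * n) :=
  colstack (fun k : 'I_#|nbrs e i| => Cij i (enum_val k)).
End Mats.

From HB Require Import structures.
From mathcomp Require Import all_boot all_order all_algebra.
From mathcomp Require Import reals zify.
Set Implicit Arguments. Unset Strict Implicit. Unset Printing Implicit Defensive.
Import Order.TTheory GRing.Theory Num.Theory.
Local Open Scope ring_scope.

(* Take any [L] supported on the neighbour pattern of [e] with zero row sums,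
   and let [H_i] be minus the row [i] of [L], restricted to the neighbours of
   [i], tensored with [I_n].  Then the closed-loop matrix is [L (x) I_n] and
   [A^j B_q = (L^j e_q) (x) I_n], so [(A, B_q)] has controllability index [m]
   as soon as the Krylov matrix [[e_q, L e_q, ..., L^(m-1) e_q]] is invertible.
   For one root [q] this holds for the Laplacian of a spanning out-tree rooted
   at [q] whose weights are distinct, decrease with the depth and vanish at
   [q]: a left eigenvector for the weight of [v], vanishing above [v], keeps a
   constant sign on the branch from [v] to [q] and so cannot vanish at [q].
   Interpolating these [m] Laplacians by Lagrange polynomials gives a family
   [L(x)] whose Krylov determinants are polynomials in [x], the [q]-th one
   nonzero at the [q]-th node; any common non-root [x] serves every [q]. *)

Lemma enum_prod1 n : enum {: 'I_1 * 'I_n} = [seq (ord0, c) | c <- enum 'I_n].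
Proof. by rewrite enumT unlock /= /prod_enum enum_ordSl enum_ord0 /= cats0. Qed.

Lemma mxvec_index1 n (c : 'I_n) : mxvec_index (0 : 'I_1) c = cast_ord (esym (mul1n n)) c.
Proof.
have lt_c : (enum_rank (@ord0 0, c) < n)%N.
  by rewrite (leq_trans (ltn_ord _)) // card_prod !card_ord mul1n.
apply: val_inj => /=.
have := nth_enum_rank (@ord0 0, c) (@ord0 0, c).
rewrite enum_prod1 (nth_map c) ?size_enum_ord // => -[/(congr1 val)].
by rewrite /= nth_enum_ord.
Qed.

Lemma enum_val_mxvec_index m n (i : 'I_m) (j : 'I_n) :
  enum_val (cast_ord (esym (mxvec_cast m n)) (mxvec_index i j)) = (i, j).
Proof. by rewrite cast_ordK enum_rankK. Qed.

Lemma eq_mxvec_index m n (i i' : 'I_m) (j j' : 'I_n) :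
  (mxvec_index i j == mxvec_index i' j') = (i == i') && (j == j').
Proof. by rewrite (inj_eq (@cast_ord_inj _ _ _)) (inj_eq enum_rank_inj). Qed.

Lemma sum_mxvec_index (V : nmodType) m n (F : 'I_(m * n) -> V) :
  \sum_k F k = \sum_i \sum_j F (mxvec_index i j).
Proof.
rewrite pair_bigA (reindex (uncurry (@mxvec_index m n))) //=.
  by apply: eq_bigr => -[].
exact: curry_mxvec_bij.
Qed.

Lemma castmx_mul_cancel (R : pzSemiRingType) m n n' p (e : n = n')
    (A : 'M[R]_(m, n)) (B : 'M[R]_(n, p)) :
  castmx (erefl, e) A *m castmx (e, erefl) B = A *m B.
Proof. by case: n' / e. Qed.

Lemma mulmx_castmx (R : pzSemiRingType) m n p p' (e : p = p')
    (A : 'M[R]_(m, n)) (B : 'M[R]_(n, p)) :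
  A *m castmx (erefl, e) B = castmx (erefl, e) (A *m B).
Proof. by case: p' / e. Qed.

Lemma sum_mul_natr_eq (R : pzSemiRingType) n (F : 'I_n -> R) j :
  \sum_x F x * (j == x)%:R = F j.
Proof.
rewrite (bigD1 j) //= eqxx mulr1 big1 ?addr0 // => x.
by rewrite eq_sym => /negPf ->; rewrite mulr0.
Qed.

Lemma mulmx_sum_col_row (R : pzSemiRingType) m n p (A : 'M[R]_(m, n)) (B : 'M[R]_(n, p)) :
  A *m B = \sum_j col j A *m row j B.
Proof.
apply/matrixP => a b; rewrite mxE summxE; apply: eq_bigr => j _.
by rewrite mxE big_ord1 !mxE.
Qed.

Lemma sum_delta_row (R : pzSemiRingType) m n (A : 'M[R]_(m, n)) :
  \sum_i delta_mx i 0 *m row i A = A.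
Proof.
under eq_bigr do rewrite rowE mulmxA mul_delta_mx.
by rewrite -mulmx_suml -mx1_sum_delta mul1mx.
Qed.

Section Kron.
Variable R : comNzRingType.

Lemma kronE p q r s (A : 'M[R]_(p, q)) (B : 'M[R]_(r, s)) i j k l :
  kron A B (mxvec_index i j) (mxvec_index k l) = A i k * B j l.
Proof. by rewrite mxE !enum_val_mxvec_index. Qed.

Lemma kron_mul p q r s t u (A : 'M[R]_(p, q)) (B : 'M[R]_(r, s))
    (C : 'M[R]_(q, t)) (D : 'M[R]_(s, u)) :
  kron A B *m kron C D = kron (A *m C) (B *m D).
Proof.
apply/matrixP => a b; case/mxvec_indexP: a => i j; case/mxvec_indexP: b => k l.
rewrite kronE !mxE sum_mxvec_index big_distrlr /=.
by apply: eq_bigr => x _; apply: eq_bigr => y _; rewrite !kronE mulrACA.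
Qed.

Lemma kron_sum I (r : seq I) (P : pred I) p q s t (A : I -> 'M[R]_(p, q))
    (B : 'M[R]_(s, t)) :
  kron (\sum_(i <- r | P i) A i) B = \sum_(i <- r | P i) kron (A i) B.
Proof.
apply/matrixP => a b; case/mxvec_indexP: a => i j; case/mxvec_indexP: b => k l.
rewrite kronE !summxE mulr_suml; apply: eq_bigr => x _.
by rewrite kronE.
Qed.

Lemma kron11 p n : kron (1%:M : 'M[R]_p) (1%:M : 'M[R]_n) = 1%:M.
Proof.
apply/matrixP => a b; case/mxvec_indexP: a => i j; case/mxvec_indexP: b => k l.
by rewrite kronE !mxE eq_mxvec_index -natrM mulnb.
Qed.

Lemma kron1X m n (L : 'M[R]_m) k :
  kron L (1%:M : 'M[R]_n) ^+ k = kron (L ^+ k) 1%:M.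
Proof.
elim: k => [|k IHk]; first by rewrite !expr0 kron11.
by rewrite !exprS IHk -!mulmxE kron_mul mulmx1.
Qed.

End Kron.

Definition krylov_mx (R : pzRingType) m (L : 'M[R]_m) (q : 'I_m) : 'M[R]_m :=
  \matrix_(i, j) (L ^+ j) i q.

Lemma map_krylov_mx (R S : pzRingType) (f : {rmorphism R -> S}) m (L : 'M[R]_m) q :
  map_mx f (krylov_mx L q) = krylov_mx (map_mx f L) q.
Proof.
have map_mxX k : map_mx f (L ^+ k) = map_mx f L ^+ k.
  by elim: k => [|k IHk]; rewrite ?map_mx1 // !exprS -!mulmxE map_mxM IHk.
by apply/matrixP => i j; rewrite !mxE -map_mxX mxE.
Qed.

Section Ctrb.
Variable R : fieldType.

Lemma ctrb_index_eq_full k p (F : 'M[R]_(k * p)) (G : 'M[R]_(k * p, p)) :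
  (0 < p)%N -> ctrb_full F G k -> ctrb_index_eq F G k.
Proof.
move=> p_gt0 full; split; first by exists k.
split=> // k' lt_k'k; rewrite /ctrb_full neq_ltn; apply/orP; left.
apply: leq_ltn_trans (rank_leq_col _) _.
by rewrite big_const_ord iter_addn_0 mulnC ltn_pmul2r.
Qed.

Variables (m n : nat).

Lemma kron1X_mul_Btil (L : 'M[R]_m) (q : 'I_m) (j : 'I_m) :
  kron L (1%:M : 'M_n) ^+ j *m @Btil R m n q
  = castmx (erefl, mul1n n) (kron (col j (krylov_mx L q)) 1%:M).
Proof.
rewrite kron1X /Btil mulmx_castmx kron_mul mulmx1 -colE.
by congr (castmx _ (kron _ _)); apply/colP => i; rewrite !mxE.
Qed.

Lemma ctrb_full_kron1 (L : 'M[R]_m) (q : 'I_m) :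
  \det (krylov_mx L q) != 0 -> ctrb_full (kron L (1%:M : 'M_n)) (@Btil R m n q) m.
Proof.
move=> detK; set K := krylov_mx L q.
have K_unit : K \in unitmx by rewrite unitmxE unitfE.
apply/row_freeP.
exists (\mxcol_j castmx (mul1n n, erefl) (kron (row j (invmx K)) (1%:M : 'M_n))).
rewrite mul_mxrow_mxcol.
under eq_bigr do rewrite kron1X_mul_Btil castmx_mul_cancel kron_mul mulmx1.
by rewrite -kron_sum -mulmx_sum_col_row mulmxV // kron11.
Qed.

End Ctrb.

Section Gains.
Variables (R : comNzRingType) (m n : nat) (e : rel 'I_m).

Definition nbr_laplacian (L : 'M[R]_m) : Prop :=
  (forall i j, j \notin nbrs e i -> L i j = 0) /\ (forall i, \sum_j L i j = 0).

Definition nbr_diff (i : 'I_m) : 'M[R]_(#|nbrs e i|, m) :=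
  \matrix_k (delta_mx 0 i - delta_mx 0 (enum_val k)).

Definition nbr_row (L : 'M[R]_m) (i : 'I_m) : 'rV[R]_#|nbrs e i| :=
  \row_k (- L i (enum_val k)).

Definition nbr_gain (L : 'M[R]_m) (i : 'I_m) : 'M[R]_(n, #|nbrs e i| * n) :=
  castmx (mul1n n, erefl) (kron (nbr_row L i) 1%:M).

Lemma Ctil_kron i : @Ctil R m n e i = kron (nbr_diff i) 1%:M.
Proof.
apply/matrixP => a b; case/mxvec_indexP: a => k s; case/mxvec_indexP: b => j t.
rewrite kronE /Ctil /colstack mxE enum_val_mxvec_index /Cij castmxE /= cast_ord_id.
by rewrite -mxvec_index1 kronE !mxE.
Qed.

Lemma nbr_row_diff L : nbr_laplacian L -> forall i, nbr_row L i *m nbr_diff i = row i L.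
Proof.
move=> [L_supp L_row] i; apply/rowP => j; rewrite !mxE.
under eq_bigr do rewrite !mxE eqxx /=.
rewrite -(big_enum_val (fun x => - L i x * ((j == i)%:R - (j == x)%:R))) /=.
rewrite [LHS](_ : _ = \sum_x - L i x * ((j == i)%:R - (j == x)%:R)); last first.
  rewrite [RHS](bigID (mem (nbrs e i))) /= [X in _ + X]big1 ?addr0 // => x.
  by move=> /L_supp ->; rewrite oppr0 mul0r.
under eq_bigr do rewrite mulNr mulrBr opprB.
rewrite sumrB -big_distrl /= L_row mul0r subr0.
by rewrite sum_mul_natr_eq.
Qed.

Lemma closed_loop_kron L : nbr_laplacian L ->
  \sum_i @Btil R m n i *m nbr_gain L i *m @Ctil R m n e i = kron L 1%:M.
Proof.
move=> hL; rewrite -[in RHS](sum_delta_row L) kron_sum; apply: eq_bigr => i _.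
by rewrite /Btil /nbr_gain castmx_mul_cancel Ctil_kron !kron_mul !mulmx1 -mulmxA nbr_row_diff.
Qed.

End Gains.

Lemma nbr_laplacian_comb (R : comNzRingType) m (e : rel 'I_m) (I : finType)
    (c : I -> R) (Lp : I -> 'M[R]_m) :
  (forall p, nbr_laplacian e (Lp p)) -> nbr_laplacian e (\sum_p c p *: Lp p).
Proof.
move=> Lp_lap; split=> [i j j_out|i].
  rewrite summxE big1 // => p _; rewrite mxE.
  by have [supp _] := Lp_lap p; rewrite supp ?mulr0.
under eq_bigr do rewrite summxE; rewrite exchange_big big1 // => p _.
under eq_bigr do rewrite mxE; rewrite -big_distrr /=.
by have [_ row0] := Lp_lap p; rewrite row0 mulr0.
Qed.

Section TreeLaplacian.
Variables (R : realFieldType) (m : nat) (q : 'I_m) (par : 'I_m -> 'I_m) (rho : 'I_m -> nat).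
Hypothesis rho_inj : injective rho.
Hypothesis rho_par : forall s, s != q -> (rho (par s) < rho s)%N.

Definition tree_weight (s : 'I_m) : R := if s == q then 0 else (rho s).+1%:R^-1.
Local Notation w := tree_weight.

Definition tree_laplacian : 'M[R]_m :=
  \matrix_(i, j) (w i * ((j == i)%:R - (j == par i)%:R)).
Local Notation T := tree_laplacian.

Lemma tree_weight_root : w q = 0.
Proof. by rewrite /w eqxx. Qed.

Lemma tree_weight_ge0 s : 0 <= w s.
Proof. by rewrite /w; case: ifP => // _; rewrite invr_ge0 ler0n. Qed.

Lemma tree_weight_gt0 s : s != q -> 0 < w s.
Proof. by rewrite /w => /negPf ->; rewrite invr_gt0 ltr0Sn. Qed.

Lemma tree_weight_lt s t : s != q -> t != q -> (rho s < rho t)%N -> w t < w s.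
Proof.
rewrite /w => /negPf -> /negPf -> lt_st.
by rewrite ltf_pV2 ?posrE ?ltr0Sn // ltr_nat ltnS.
Qed.

Lemma mul_tree_laplacian (y : 'rV[R]_m) s :
  (y *m T) 0 s = w s * y 0 s - \sum_(i | par i == s) w i * y 0 i.
Proof.
rewrite mxE; under eq_bigr do rewrite mxE mulrA mulrBr.
rewrite sumrB; congr (_ - _).
  by rewrite sum_mul_natr_eq mulrC.
rewrite [RHS]big_mkcond /=; apply: eq_bigr => i _.
by rewrite eq_sym; case: eqP; rewrite ?mulr1 ?mulr0 // mulrC.
Qed.

Lemma tree_laplacian_nbr (e : rel 'I_m) :
  (forall s, s != q -> e (par s) s) -> nbr_laplacian e T.
Proof.
move=> par_edge; split=> [i j|i].
  rewrite inE negb_or => /andP[/negPf ji not_eji]; rewrite mxE ji sub0r.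
  case: (eqVneq i q) => [->|iq]; first by rewrite tree_weight_root mul0r.
  by case: eqP => [jpi|_]; [rewrite jpi par_edge in not_eji | rewrite oppr0 mulr0].
have sum1 k : \sum_j (j == k)%:R = 1 :> R.
  by rewrite (bigD1 k) //= eqxx big1 ?addr0 // => j /negPf ->.
by under eq_bigr do rewrite mxE; rewrite -big_distrr /= sumrB !sum1 subrr mulr0.
Qed.

Lemma tree_eigen_child_sum (y : 'rV[R]_m) v : y *m T = w v *: y ->
  forall s, \sum_(i | par i == s) w i * y 0 i = (w s - w v) * y 0 s.
Proof.
move=> eig s; have := congr1 (fun z : 'rV_m => z 0 s) eig.
by rewrite mul_tree_laplacian mxE mulrBl => <-; rewrite opprB addrC subrK.
Qed.

Definition vanishes_above (y : 'rV[R]_m) v := forall s, (rho v < rho s)%N -> y 0 s = 0.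

Lemma tree_eigen_ge0 (y : 'rV[R]_m) v :
  y *m T = w v *: y -> 0 < y 0 v -> vanishes_above y v -> y 0 q = 0 ->
  forall s, 0 <= y 0 s.
Proof.
move=> eig yv_gt0 above yq0 s; have [k] := ubnP (rho v - rho s).
elim: k s => // k IH s lt_k.
case: (eqVneq s q) => [->|sq]; first by rewrite yq0.
have vq : v != q by apply: contraTneq yv_gt0 => ->; rewrite yq0 ltxx.
case: (ltngtP (rho v) (rho s)) => [lt_vs|lt_sv|/rho_inj <-]; last exact: ltW.
  by rewrite above.
have : 0 <= (w s - w v) * y 0 s.
  rewrite -tree_eigen_child_sum //; apply: sumr_ge0 => i /eqP par_i.
  case: (eqVneq i q) => [->|iq]; first by rewrite tree_weight_root mul0r.
  rewrite mulr_ge0 ?tree_weight_ge0 //; apply: IH.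
  by have := rho_par iq; rewrite par_i; lia.
by rewrite pmulr_rge0 // subr_gt0 tree_weight_lt.
Qed.

Lemma tree_eigen_root_neq0 (y : 'rV[R]_m) v :
  y *m T = w v *: y -> y 0 v != 0 -> vanishes_above y v -> y 0 q != 0.
Proof.
wlog yv_gt0 : y / 0 < y 0 v => [wlog_pos|] eig yv above.
  case: (ltgtP (y 0 v) 0) => [yv_lt0|yv_gt0|yv0]; last by rewrite yv0 eqxx in yv.
    have := wlog_pos (- y); rewrite !mxE !oppr_eq0 oppr_gt0; apply=> //.
      by rewrite mulNmx eig scalerN.
    by move=> s /above; rewrite mxE => ->; rewrite oppr0.
  exact: wlog_pos.
apply/negP => /eqP yq0; have y_ge0 := tree_eigen_ge0 eig yv_gt0 above yq0.
suff no_pos s : s != q -> 0 < y 0 s -> False.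
  apply: (no_pos v _ yv_gt0).
  by apply: contraTneq yv_gt0 => ->; rewrite yq0 ltxx.
have [k] := ubnP (rho s); elim: k s => // k IH s lt_k sq ys_gt0.
have : 0 < (w (par s) - w v) * y 0 (par s).
  rewrite -tree_eigen_child_sum // (bigD1 s) //=.
  rewrite (@lt_le_trans _ _ (w s * y 0 s)) ?mulr_gt0 ?tree_weight_gt0 // lerDl.
  by apply: sumr_ge0 => i _; rewrite mulr_ge0 ?tree_weight_ge0.
move=> prod_gt0; apply: (IH (par s)).
- by apply: leq_trans (rho_par sq) _; rewrite -ltnS.
- by apply: contraTneq prod_gt0 => ->; rewrite yq0 mulr0 ltxx.
- rewrite lt_def y_ge0 andbT.
  by apply: contraTneq prod_gt0 => ->; rewrite mulr0 ltxx.
Qed.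

Lemma exists_top (y : 'rV[R]_m) : y != 0 ->
  exists2 v, y 0 v != 0 & vanishes_above y v.
Proof.
move=> y_neq0; have [s0 ys0] : exists s0, y 0 s0 != 0.
  apply/existsP; apply: contraNT y_neq0 => /existsPn y0.
  by apply/eqP/rowP => s; rewrite mxE; apply/eqP/negbNE.
case: (@arg_maxnP _ s0 (fun s => y 0 s != 0) rho ys0) => v yv v_max.
exists v => // s lt_vs; apply/eqP; apply: contraTT lt_vs => ys.
by rewrite -leqNgt; apply: v_max.
Qed.

Lemma no_krylov_annihilator k (y : 'rV[R]_m) v :
  y 0 v != 0 -> vanishes_above y v -> (#|[set s | rho s <= rho v]| <= k)%N ->
  (forall j, (j < k)%N -> (y *m T ^+ j) 0 q = 0) -> False.
Proof.
elim: k y v => [|k IH] y v yv above card_le annihil.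
  by move: card_le; rewrite leqn0 => /eqP/cards0_eq/setP/(_ v); rewrite !inE leqnn.
have yq0 : y 0 q = 0 by have := annihil 0%N isT; rewrite expr0 mulmx1.
(* [z] loses the top of [y] and annihilates one Krylov vector fewer. *)
set z := y *m T - w v *: y.
have z_above s : (rho v <= rho s)%N -> z 0 s = 0.
  move=> le_vs; rewrite /z [LHS]mxE mul_tree_laplacian !mxE big1 ?subr0; last first.
    move=> i /eqP par_i; case: (eqVneq i q) => [->|iq]; first by rewrite yq0 mulr0.
    by rewrite above ?mulr0 //; have := rho_par iq; rewrite par_i; lia.
  case: (eqVneq s v) => [->|sv]; first by rewrite subrr.
  rewrite above ?mulr0 ?subrr //.
  by rewrite ltn_neqAle le_vs andbT; apply: contra sv => /eqP/rho_inj ->.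
case: (eqVneq z 0) => [z0|z_neq0].
  have eig : y *m T = w v *: y by apply/eqP; rewrite -subr_eq0 -/z z0.
  by have := tree_eigen_root_neq0 eig yv above; rewrite yq0 eqxx.
have [v' zv' above'] := exists_top z_neq0.
have lt_v'v : (rho v' < rho v)%N.
  by rewrite ltnNge; apply: contra zv' => /z_above ->.
apply: (IH z v') => //.
  rewrite -ltnS (leq_trans _ card_le) // proper_card //; apply/properP; split.
    by apply/subsetP => s; rewrite !inE => le_s; lia.
  by exists v; rewrite !inE ?leqnn // -ltnNge.
move=> j lt_jk; rewrite /z mulmxBl -scalemxAl -mulmxA mulmxE -exprS.
by rewrite [LHS]mxE [X in _ + X]mxE [X in - X]mxE !annihil ?mulr0 ?subr0 // ltnW.
Qed.

Lemma det_krylov_tree_laplacian_neq0 : \det (krylov_mx T q) != 0.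
Proof.
apply/negP => /det0P[y y_neq0 yK0]; have [v yv above] := exists_top y_neq0.
apply: (@no_krylov_annihilator m y v yv above).
  by rewrite (leq_trans (max_card _)) ?card_ord.
move=> j lt_jm; have := congr1 (fun z : 'rV_m => z 0 (Ordinal lt_jm)) yK0.
by rewrite [RHS]mxE => <-; rewrite !mxE; apply: eq_bigr => i _; rewrite mxE.
Qed.

End TreeLaplacian.

Section SpanningTree.
Variables (m : nat) (e : rel 'I_m) (q : 'I_m).
Hypothesis q_reaches : forall s, connect e q s.

Fixpoint reachable_within (k : nat) (s : 'I_m) : bool :=
  if k is k'.+1 then reachable_within k' s || [exists p, reachable_within k' p && e p s]
  else s == q.

Lemma reachable_within_path k x p :
  reachable_within k x -> path e x p -> reachable_within (k + size p) (last x p).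
Proof.
elim: p x k => [|y p IHp] x k /= reach_x; first by rewrite addn0.
case/andP=> e_xy path_p; rewrite addnS -addSn; apply: IHp => //=.
by apply/orP; right; apply/existsP; exists x; rewrite reach_x.
Qed.

Lemma exists_reachable_within s : exists k, reachable_within k s.
Proof.
case/connectP: (q_reaches s) => p path_p ->; exists (0 + size p)%N.
by apply: reachable_within_path => /=.
Qed.

Definition depth s := ex_minn (exists_reachable_within s).

Lemma exists_parent s : s != q -> exists p, e p s && (depth p < depth s)%N.
Proof.
move=> sq; rewrite /depth; case: ex_minnP => -[|k] /=; first by rewrite (negPf sq).
case/orP=> [reach_k /(_ _ reach_k)|/existsP[p /andP[reach_p e_ps]] _]; first by rewrite ltnn.
by exists p; rewrite e_ps; case: ex_minnP => k' _ /(_ _ reach_p).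
Qed.

Definition parent s := odflt q [pick p | e p s && (depth p < depth s)%N].

Lemma parent_spec s : s != q -> e (parent s) s && (depth (parent s) < depth s)%N.
Proof.
move=> sq; rewrite /parent; case: pickP => [p -> //|no_parent].
by have [p] := exists_parent sq; rewrite no_parent.
Qed.

Lemma parent_edge s : s != q -> e (parent s) s.
Proof. by move/parent_spec/andP=> []. Qed.

Definition tree_rank s := (depth s * m + s)%N.

Lemma tree_rank_inj : injective tree_rank.
Proof.
move=> s t /(congr1 (modn^~ m)); rewrite !modnMDl !modn_small //.
exact: val_inj.
Qed.

Lemma tree_rank_parent s : s != q -> (tree_rank (parent s) < tree_rank s)%N.
Proof.
move/parent_spec/andP=> [_ lt_depth]; rewrite /tree_rank.
have := ltn_ord (parent s); nia.
Qed.

End SpanningTree.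

Lemma exists_nonroot (R : numDomainType) (p : {poly R}) : p != 0 -> exists x, ~~ root p x.
Proof.
move=> p_neq0; pose xs : seq R := [seq i%:R | i <- iota 0 (size p)].
have [all_roots|/allPn[x _ px]] := boolP (all (root p) xs); last by exists x.
suff : (size xs < size p)%N by rewrite /xs size_map size_iota ltnn.
apply: max_poly_roots => //; rewrite /xs map_inj_uniq ?iota_uniq //.
exact: mulrIn (oner_neq0 R).
Qed.

Section GenericCombination.
Variables (R : numFieldType) (m : nat) (Lp : 'I_m -> 'M[R]_m).
Hypothesis m_gt0 : (0 < m)%N.
Hypothesis Lp_krylov : forall q, \det (krylov_mx (Lp q) q) != 0.

Let node (k : nat) : R := k%:R.
Let node_inj : injective node := mulrIn (oner_neq0 R).
Let lag (p : 'I_m) : {poly R} := tnth (lagrange m node) p.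

Lemma exists_comb_krylov :
  exists c : 'I_m -> R, forall q, \det (krylov_mx (\sum_p c p *: Lp p) q) != 0.
Proof.
pose P := \sum_p lag p *: map_mx polyC (Lp p).
have eval_krylov x q :
    (\det (krylov_mx P q)).[x] = \det (krylov_mx (\sum_p (lag p).[x] *: Lp p) q).
  rewrite -horner_evalE -det_map_mx map_krylov_mx; congr (\det (krylov_mx _ _)).
  apply/matrixP => i j; rewrite !mxE !summxE /= horner_evalE horner_sum.
  by apply: eq_bigr => p _; rewrite !mxE hornerM hornerC.
have interp (q : 'I_m) : \sum_p (lag p).[node q] *: Lp p = Lp q.
  rewrite (bigD1 q) //= lagrange_sample // eqxx scale1r big1 ?addr0 // => p /negPf pq.
  by rewrite lagrange_sample // pq scale0r.
have prod_neq0 : \prod_q \det (krylov_mx P q) != 0.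
  rewrite prodf_seq_neq0; apply/allP => q _ /=; apply: contraNneq (Lp_krylov q).
  by rewrite -interp -eval_krylov => ->; rewrite horner0.
have [x prod_x] := exists_nonroot prod_neq0.
exists (fun p => (lag p).[x]) => q; rewrite -eval_krylov.
by move: prod_x; rewrite /root horner_prod (bigD1 q) //= mulf_eq0 negb_or => /andP[].
Qed.

End GenericCombination.

Lemma exists_nbr_laplacian_krylov (R : realFieldType) m (e : rel 'I_m) :
  (0 < m)%N -> strongly_connected e ->
  exists L : 'M[R]_m, nbr_laplacian e L /\ forall q, \det (krylov_mx L q) != 0.
Proof.
move=> m_gt0 sc.
pose Lp q : 'M[R]_m := tree_laplacian R q (parent (sc q)) (tree_rank (sc q)).
have Lp_krylov q : \det (krylov_mx (Lp q) q) != 0.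
  exact/det_krylov_tree_laplacian_neq0/tree_rank_parent/tree_rank_inj.
have [c L_krylov] := exists_comb_krylov m_gt0 Lp_krylov.
exists (\sum_p c p *: Lp p); split=> //.
apply: nbr_laplacian_comb => q; apply: tree_laplacian_nbr.
exact: parent_edge.
Qed.

Theorem lemma3 (R : realType) (m n : nat) (e : rel 'I_m) :
  (0 < m)%N -> (0 < n)%N -> strongly_connected e ->
  exists H : forall i : 'I_m, 'M[R]_(n, #|nbrs e i| * n),
    forall q : 'I_m,
      ctrb_index_eq (\sum_(i < m) @Btil R m n i *m H i *m @Ctil R m n e i) (@Btil R m n q) m.
Proof.
move=> m_gt0 n_gt0 sc; have [L [L_lap L_krylov]] := exists_nbr_laplacian_krylov R m_gt0 sc.
exists (nbr_gain n e L) => q; rewrite closed_loop_kron //.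
exact/ctrb_index_eq_full/ctrb_full_kron1.
Qed.
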